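(* Let $H(t)$ be a continuous family of Hermitian operators on a finite-dimensional Hilbert space, $A(t):=-iH(t)$, and for $t\in\mathbb{R}$ let $$\Omega_2(t):=\int_0^tA(s)\,ds-\frac12\int_0^t\Big[\int_0^sA(\sigma)\,d\sigma,\;A(s)\Big]ds,\qquad\dot\Omega_2(t)=A(t)-\frac12\Big[\int_0^tA(\sigma)\,d\sigma,\;A(t)\Big].$$ Let $g$ be the entire function determined by $\frac{e^z-1}{z}=1+\frac12z+\frac16z^2+g(z)z^3$. Then there is an absolute constant $C$ such that $$\big\|g(\operatorname{ad}_{\Omega_2})\big(\operatorname{ad}_{\Omega_2}^3(\dot\Omega_2)\big)\big\|\le C\big\|\operatorname{ad}_{\Omega_2}^3(\dot\Omega_2)\big\|.$$
   Context: $\operatorname{ad}_\Omega(X)=[\Omega,X]$ and $\operatorname{ad}_\Omega^{k+1}(X)=[\Omega,\operatorname{ad}^k_\Omega(X)]$; $g(\operatorname{ad}_{\Omega_2})$ is defined via the power series of $g$. $\|\cdot\|$ is the spectral norm. *)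

From HB Require Import structures.
From mathcomp Require Import all_boot all_order all_algebra.
From mathcomp Require Import all_classical all_reals all_analysis.
From mathcomp Require Import complex.
Set Implicit Arguments. Unset Strict Implicit. Unset Printing Implicit Defensive.
Import Order.TTheory GRing.Theory Num.Theory.
Import numFieldNormedType.Exports.
Local Open Scope classical_set_scope.
Local Open Scope ring_scope.
Local Open Scope complex_scope.

Section Defs.
Variable R : realType.
Local Notation C := (complex R).
Variable n : nat.

Definition vnorm (v : 'cV[C]_n) : R :=
  Num.sqrt (\sum_(i < n) (complex.Re (v i 0) ^+ 2 + complex.Im (v i 0) ^+ 2)).

Definition specnorm (M : 'M[C]_n) : R :=
  sup [set vnorm (M *m v) | v in [set v : 'cV[C]_n | vnorm v <= 1]].

Definition oint (a b : R) (f : R -> R) : R :=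
  if a <= b then Rintegral lebesgue_measure `[a, b] f
  else - Rintegral lebesgue_measure `[b, a] f.

Definition mxint (a b : R) (F : R -> 'M[C]_n) : 'M[C]_n :=
  \matrix_(i, j) (oint a b (fun s => complex.Re (F s i j)) +i* oint a b (fun s => complex.Im (F s i j))).

Definition comm (X Y : 'M[C]_n) : 'M[C]_n := X *m Y - Y *m X.

Definition adk (Om : 'M[C]_n) (k : nat) (X : 'M[C]_n) : 'M[C]_n :=
  iter k (comm Om) X.

Definition is_hermitian (M : 'M[C]_n) : Prop := forall i j, M j i = (M i j)^*.

Definition mx_continuous (F : R -> 'M[C]_n) : Prop :=
  forall i j, continuous (fun t => complex.Re (F t i j)) /\ continuous (fun t => complex.Im (F t i j)).

(* g(z) = sum_{k>=0} z^k/(k+4)!, the entire function with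
   (e^z-1)/z = 1 + z/2 + z^2/6 + g(z) z^3.
   g(ad_Om)(Y) := sum_k ad_Om^k(Y)/(k+4)!, the series summed entrywise. *)
Definition g_ad (Om Y : 'M[C]_n) : 'M[C]_n :=
  \matrix_(i, j)
    ((limn (fun N => \sum_(0 <= k < N) (complex.Re (adk Om k Y i j) / ((k + 4)`!)%:R)))
     +i* (limn (fun N => \sum_(0 <= k < N) (complex.Im (adk Om k Y i j) / ((k + 4)`!)%:R)))).

Variable H : R -> 'M[C]_n.

Definition A (t : R) : 'M[C]_n := - ('i *: H t).

Definition Omega2 (t : R) : 'M[C]_n :=
  mxint 0 t A - 2%:R^-1 *: mxint 0 t (fun s => comm (mxint 0 s A) (A s)).

Definition dOmega2 (t : R) : 'M[C]_n :=
  A t - 2%:R^-1 *: comm (mxint 0 t A) (A t).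

End Defs.

(* Omega2 t is skew-Hermitian for every t: A is, and real integrals, real
   multiples and commutators of skew-Hermitian matrices are skew-Hermitian.  Hence Omega2 t = P^* diag (i r) P with P
   unitary, and in that basis ad_Omega2 multiplies the (a, b) entry by
   i (r_a - r_b), so g(ad_Omega2) is the Schur multiplier
   Z |-> [g (i (r_a - r_b)) Z_ab].  The Beta integral
   \int_0^1 s^k (1 - s)^3 ds = 6 k! / (k + 4)! gives the representation
     g z = 1/6 \int_0^1 (1 - s)^3 e^(s z) ds,
   whence <x, g(ad)(Z) u> = 1/6 \int_0^1 (1 - s)^3 <D_s x, Z D_s u> ds with
   the unitary D_s = diag (e^(- i s r_a)).  So ||g(ad_Omega2)(Z)|| <= ||Z|| / 24
   for every Z, and the theorem holds with C = 1/24. *)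

From mathcomp Require Import all_boot all_order all_algebra.
From mathcomp Require Import all_classical all_reals all_analysis.
From mathcomp Require Import complex ring lra.
Set Implicit Arguments. Unset Strict Implicit. Unset Printing Implicit Defensive.
Import Order.TTheory GRing.Theory Num.Theory.
Import numFieldNormedType.Exports.
Local Open Scope classical_set_scope.
Local Open Scope ring_scope.

Local Notation Re := complex.Re.
Local Notation Im := complex.Im.

Section ComplexExponential.
Local Open Scope complex_scope.
Variable R : realType.
Local Notation C := (complex R).
Implicit Types (q : C) (t : R).

Definition expi t : C := cos t +i* sin t.

Lemma expiD t t' : expi (t + t') = expi t * expi t'.
Proof. by rewrite /expi cosD sinD; simpc; rewrite [sin t * _ + _]addrC. Qed.

Lemma conj_expi t : (expi t)^*%R = expi (- t).
Proof. by rewrite /expi cosN sinN. Qed.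

Lemma Re_mul_expi q t : Re (q * expi t) = Re q * cos t - Im q * sin t.
Proof. by case: q => a b; rewrite /expi; simpc. Qed.

Lemma continuous_Re_mul_expi q (f : R -> R) x :
  {for x, continuous f} -> {for x, continuous (fun s => Re (q * expi (f s)))}.
Proof.
move=> cf; rewrite (_ : (fun s => _) = fun s => Re q * cos (f s) - Im q * sin (f s)).
  apply: (continuousB (f := fun s => Re q * cos (f s))).
    apply: (continuousM (s := fun=> Re q)); first exact: cst_continuous.
    by apply: (continuous_comp (g := cos) cf); exact: continuous_cos.
  apply: (continuousM (s := fun=> Im q)); first exact: cst_continuous.
  by apply: (continuous_comp (g := sin) cf); exact: continuous_sin.
by apply/funext => s; rewrite Re_mul_expi.
Qed.

End ComplexExponential.

Ltac continuity :=
  lazymatch goal with |- forall _, _ => move=> ? | _ => idtac end;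
  (* [cbv] turns {for x, continuous f} into continuous_at x f *)
  repeat (cbv beta delta [prop_for inPhantom]; match goal with
  | hc : continuous ?g |- continuous_at _ ?g => exact: hc
  | |- continuous_at _ (fun s => @?f s * @?g s) => apply: (continuousM (s := f) (t := g))
  | |- continuous_at _ (fun s => @?f s + @?g s) => apply: (continuousD (f := f) (g := g))
  | |- continuous_at _ (fun s => - @?f s) => apply: (continuousN (f := f))
  | |- continuous_at _ (fun s => @?f s ^+ ?n) =>
      apply: (continuous_comp (f := f) _ (@exprn_continuous _ n _))
  | |- continuous_at _ (fun s : ?T => `|@?f s|) =>
      apply: (continuous_comp (f := f) _ (@norm_continuous _ T^o _))
  | |- continuous_at _ (fun s => Re (?q * expi (@?f s))) =>
      apply: (continuous_Re_mul_expi (q := q) (f := f))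
  | |- continuous_at _ (fun s => s) => exact: cvg_id
  | |- continuous_at _ (fun s => _) => exact: cst_continuous
  | |- continuous_at _ (fun s => ?h (@?f s)) =>
      apply: (continuous_comp (f := f) (g := h));
      [idtac | first [ exact: continuous_cos | exact: continuous_sin
                     | match goal with hc : continuous h |- _ => exact: hc end ]]
  end).

Section UnitIntervalIntegral.
Variable R : realType.
Local Notation mu := (@lebesgue_measure R).
Implicit Types f g : R -> R.

Definition int01 f : R := \int[mu]_(x in `[0%R, 1%R]) f x.

Lemma continuous_integrable01 f : continuous f -> mu.-integrable `[0%R, 1%R] (EFin \o f).
Proof.
move=> cf; apply: continuous_compact_integrable; first exact: segment_compact.
by apply: continuous_in_subspaceT => x _; exact: cf.
Qed.

Lemma int01D f g : continuous f -> continuous g ->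
  int01 (fun x => f x + g x) = int01 f + int01 g.
Proof. by move=> cf cg; rewrite /int01 RintegralD //; exact: continuous_integrable01. Qed.

Lemma int01B f g : continuous f -> continuous g ->
  int01 (fun x => f x - g x) = int01 f - int01 g.
Proof. by move=> cf cg; rewrite /int01 RintegralB //; exact: continuous_integrable01. Qed.

Lemma int01Zl (r : R) f : continuous f -> int01 (fun x => r * f x) = r * int01 f.
Proof. by move=> cf; rewrite /int01 RintegralZl //; exact: continuous_integrable01. Qed.

Lemma int01_sum (I : Type) (r : seq I) (F : I -> R -> R) :
  (forall i, continuous (F i)) ->
  int01 (fun x => \sum_(i <- r) F i x) = \sum_(i <- r) int01 (F i).
Proof.
move=> cF; elim: r => [|i r IHr].
  by under eq_fun do rewrite big_nil; rewrite big_nil /int01 Rintegral_cst //= mul0r.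
under eq_fun do rewrite big_cons.
rewrite big_cons int01D ?IHr //.
by apply: (continuous_big add_continuous) => j _; exact: cF.
Qed.

Lemma ler_int01 f g : continuous f -> continuous g ->
  (forall x, 0 <= x <= 1 -> f x <= g x) -> int01 f <= int01 g.
Proof.
move=> cf cg le_fg.
apply: le_Rintegral; [by []|exact: continuous_integrable01..|].
by move=> x; rewrite /= in_itv /=; exact: le_fg.
Qed.

Lemma ler_norm_int01 f : continuous f -> `|int01 f| <= int01 (fun x => `|f x|).
Proof. by move=> cf; apply: le_normr_Rintegral => //; exact: continuous_integrable01. Qed.

Lemma int01_beta3 k :
  int01 (fun s => s ^+ k * (1 - s) ^+ 3) = (k`! * 6)%:R / (k + 4)`!%:R.
Proof.
have := @beta_fun_fact R k 3; rewrite /beta_fun -addnS /= => <-.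
by rewrite /int01 Rintegral_mkcond.
Qed.

Lemma int01_onemX3 : int01 (fun s => (1 - s) ^+ 3) = 4%:R^-1.
Proof. by rewrite /int01 -(Rintegral_onemXn 3). Qed.

End UnitIntervalIntegral.

Section TaylorMoments.
Variable R : realType.
Implicit Types (c : nat -> R) (h : R -> R).

Definition taylor c (x : R) : R ^nat := fun k => c k * x ^+ k / k`!%:R.

Lemma taylor_tail_le c (M x B l : R) :
  (forall k, `|c k| <= M) -> `|x| <= B ->
  series (taylor c x) @ \oo --> l ->
  forall N, `|l - series (taylor c x) N| <=
    M * (limn (series (exp_coeff B)) - series (exp_coeff B) N).
Proof.
move=> le_cM le_xB cvg_l N.
have M_ge0 : 0 <= M := le_trans (normr_ge0 _) (le_cM 0%N).
apply: (@ler_cvg_to _ \oo _ _ (fun K => `|series (taylor c x) K - series (taylor c x) N|)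
   (fun K => M * (series (exp_coeff B) K - series (exp_coeff B) N))).
- by apply: cvg_norm; apply: cvgB => //; exact: cvg_cst.
- apply: cvgMl_tmp; apply: cvgB; last exact: cvg_cst.
  exact: is_cvg_series_exp_coeff.
near=> K.
have le_NK : (N <= K)%N by near: K; exists N.
have seriesB (v : R ^nat) : series v K - series v N = \sum_(N <= k < K) v k.
  by rewrite /series /= (@big_cat_nat _ _ _ N 0 K _ _ (leq0n N) le_NK) /= addrAC subrr add0r.
rewrite !seriesB mulr_sumr (le_trans (ler_norm_sum _ _ _)) // ler_sum // => k _.
rewrite /taylor /exp_coeff /= !normrM normfV normr_nat normrX mulrA.
rewrite ler_wpM2r ?invr_ge0 // ler_pM ?lerXn2r ?nnegrE //.
exact: le_trans le_xB.
Unshelve. all: by end_near.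
Qed.

Lemma sum_moment3_int01 c (m : R) N :
  \sum_(0 <= k < N) c k * m ^+ k / (k + 4)`!%:R =
  int01 (fun s => (1 - s) ^+ 3 * series (taylor c (s * m)) N) / 6%:R.
Proof.
have -> : (fun s => (1 - s) ^+ 3 * series (taylor c (s * m)) N) =
    (fun s => \sum_(0 <= k < N) c k * m ^+ k / k`!%:R * (s ^+ k * (1 - s) ^+ 3)).
  apply/funext => s; rewrite /series /= mulr_sumr; apply: eq_bigr => k _.
  by rewrite /taylor exprMn; ring.
rewrite int01_sum; last by move=> k; continuity.
rewrite mulr_suml; apply: eq_bigr => k _.
rewrite int01Zl; last by continuity.
have k0 : (k`!%:R : R) != 0 by rewrite pnatr_eq0 -lt0n fact_gt0.
have k4 : ((k + 4)`!%:R : R) != 0 by rewrite pnatr_eq0 -lt0n fact_gt0.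
by rewrite int01_beta3 natrM; field; rewrite k0 k4.
Qed.

Lemma cvg_sum_moment3 c (M : R) h (m : R) :
  (forall k, `|c k| <= M) -> continuous h ->
  (forall x, series (taylor c x) @ \oo --> h x) ->
  (fun N => \sum_(0 <= k < N) c k * m ^+ k / (k + 4)`!%:R) @ \oo -->
    int01 (fun s => (1 - s) ^+ 3 * h (s * m)) / 6%:R.
Proof.
move=> le_cM ch cvg_h.
pose tail N := M / 24%:R * (limn (series (exp_coeff `|m|)) - series (exp_coeff `|m|) N).
have tail0 : tail @ \oo --> 0.
  rewrite -(mulr0 (M / 24%:R)) -(subrr (limn (series (exp_coeff `|m|)))).
  by apply: cvgMl_tmp; apply: cvgB; [exact: cvg_cst|exact: is_cvg_series_exp_coeff].
have cont_pN (N : nat) : continuous (fun s : R => series (taylor c (s * m)) N).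
  by rewrite /series /= /taylor; apply: (continuous_big add_continuous) => k _; continuity.
have dist_le N : `|int01 (fun s => (1 - s) ^+ 3 * h (s * m)) / 6%:R -
    \sum_(0 <= k < N) c k * m ^+ k / (k + 4)`!%:R| <= tail N.
  rewrite sum_moment3_int01 -mulrBl -int01B; [|by continuity|by continuity; exact: cont_pN].
  rewrite normrM (ger0_norm (_ : 0 <= 6%:R^-1)) ?invr_ge0 //.
  apply: le_trans (ler_wpM2r _ (ler_norm_int01 _)) _; rewrite ?invr_ge0 //.
    by continuity; exact: cont_pN.
  have -> : tail N = int01 (fun s => M * (limn (series (exp_coeff `|m|)) -
      series (exp_coeff `|m|) N) * (1 - s) ^+ 3) / 6%:R.
    by rewrite int01Zl ?int01_onemX3 /tail; [field|continuity].
  rewrite ler_wpM2r ?invr_ge0 // ler_int01; [by []|by continuity; exact: cont_pN|by continuity|].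
  move=> s /andP[s0 s1]; rewrite -mulrBr normrM ger0_norm ?exprn_ge0 ?subr_ge0 //.
  rewrite mulrC ler_wpM2r ?exprn_ge0 ?subr_ge0 // (taylor_tail_le le_cM) //.
  by rewrite normrM ger0_norm // ler_piMl.
apply/subr_cvg0; apply: (squeeze_cvgr (f := fun N => - tail N) (h := tail)).
- by near=> N; rewrite -ler_norml distrC dist_le.
- by rewrite -oppr0; exact: cvgN.
- exact: tail0.
Unshelve. all: by end_near.
Qed.

End TaylorMoments.

Section ImaginaryAxis.
Local Open Scope complex_scope.
Variable R : realType.
Local Notation C := (complex R).
Implicit Types (q : C) (m t : R).

(* g (i m), by the integral representation of g *)
Definition g_imag m : C :=
  (int01 (fun s => (1 - s) ^+ 3 * cos (s * m)) / 6%:R) +i*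
  (int01 (fun s => (1 - s) ^+ 3 * sin (s * m)) / 6%:R).

Definition cos_sign k : R := (~~ odd k)%:R * (-1) ^+ k./2.
Definition sin_sign k : R := (odd k)%:R * (-1) ^+ k.-1./2.

Lemma expr_i k : 'i ^+ k = cos_sign k +i* sin_sign k :> C.
Proof.
elim/ltn_ind: k => -[_|[_|k IHk]].
- by apply/eqP; rewrite eq_complex /cos_sign /sin_sign /= expr0 mul0r mulr1 !eqxx.
- by apply/eqP; rewrite eq_complex /cos_sign /sin_sign /= expr0 mul0r mulr1 !eqxx.
rewrite !exprS mulrA -expr2 sqr_i mulN1r IHk //.
apply/eqP; rewrite eq_complex /cos_sign /sin_sign /= negbK !exprS.
rewrite mulN1r mulrN eqxx negbK /=; case: k {IHk} => [|k] /=; first by rewrite mul0r oppr0.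
by rewrite exprS mulN1r mulrN.
Qed.

Lemma Re_mul_g_imag q m :
  Re (q * g_imag m) = int01 (fun s => (1 - s) ^+ 3 * Re (q * expi (s * m))) / 6%:R.
Proof.
under eq_fun do rewrite Re_mul_expi mulrBr mulrCA [_ * (Im q * _)]mulrCA.
rewrite int01B; [|by continuity|by continuity].
rewrite !int01Zl; [|by continuity|by continuity].
by case: q => a b; rewrite /g_imag /=; ring.
Qed.

Lemma cvg_taylor_Re_mul_i q x :
  series (taylor (fun k => Re (q * 'i ^+ k)) x) @ \oo --> Re (q * expi x).
Proof.
have -> : series (taylor (fun k => Re (q * 'i ^+ k)) x) =
    fun N => Re q * series (cos_coeff x) N - Im q * series (sin_coeff x) N.
  apply/funext => N; rewrite /series /= !mulr_sumr -sumrB; apply: eq_bigr => k _.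
  case: q => a b; rewrite /taylor expr_i /cos_sign /sin_sign; simpc.
  by rewrite /cos_coeff /sin_coeff /= -exprnP; ring.
rewrite Re_mul_expi; apply: cvgB; apply: cvgMl_tmp; rewrite unlock.
  exact: is_cvg_series_cos_coeff.
exact: is_cvg_series_sin_coeff.
Qed.

Lemma normr_Re_mul_i_le q k : `|Re (q * 'i ^+ k)| <= `|Re q| + `|Im q|.
Proof.
have sign_le1 (b : bool) j : `|b%:R * (-1) ^+ j| <= 1 :> R.
  by rewrite normrM normr_sign mulr1; case: b; rewrite ?normr0 ?normr1.
rewrite expr_i; case: q => a b; simpc.
apply: le_trans (ler_normB _ _) _; rewrite /=.
by apply: lerD; rewrite normrM ler_piMr ?sign_le1.
Qed.

Lemma cvg_Re_g_imag q m :
  (fun N => \sum_(0 <= k < N) Re (q * ('i * m%:C) ^+ k) / (k + 4)`!%:R) @ \oo -->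
  Re (q * g_imag m).
Proof.
have -> : (fun N => \sum_(0 <= k < N) Re (q * ('i * m%:C) ^+ k) / (k + 4)`!%:R) =
    (fun N => \sum_(0 <= k < N) Re (q * 'i ^+ k) * m ^+ k / (k + 4)`!%:R).
  apply/funext => N; apply: eq_bigr => k _.
  by rewrite exprMn -rmorphXn mulrA; case: (q * 'i ^+ k) => a b; simpc.
rewrite Re_mul_g_imag; apply: (cvg_sum_moment3 (h := fun x => Re (q * expi x)) (normr_Re_mul_i_le q)).
- by continuity.
- exact: cvg_taylor_Re_mul_i.
Qed.

Lemma ImE_Re (z : C) : Im z = Re (- 'i * z).
Proof. by case: z => x y; rewrite -complexiE; simpc. Qed.

Lemma cvg_Im_g_imag q m :
  (fun N => \sum_(0 <= k < N) Im (q * ('i * m%:C) ^+ k) / (k + 4)`!%:R) @ \oo -->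
  Im (q * g_imag m).
Proof.
under eq_fun do under eq_bigr do rewrite ImE_Re mulrA.
by rewrite ImE_Re mulrA; exact: cvg_Re_g_imag.
Qed.

End ImaginaryAxis.

Local Open Scope sesquilinear_scope.

Lemma CauchySchwarz_pairs (R : rcfType) (I : finType) (p q c d : I -> R) :
  \sum_i (p i * c i + q i * d i) <=
  Num.sqrt (\sum_i (p i ^+ 2 + q i ^+ 2)) * Num.sqrt (\sum_i (c i ^+ 2 + d i ^+ 2)).
Proof.
set S := \sum_i (p i * c i + _); set X := \sum_i (p i ^+ 2 + _).
set Y := \sum_i (c i ^+ 2 + _).
have sum_sq_ge0 (f g : I -> R) : 0 <= \sum_i (f i ^+ 2 + g i ^+ 2).
  by apply: sumr_ge0 => i _; rewrite addr_ge0 ?sqr_ge0.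
have [S_le0|S_gt0] := lerP S 0.
  by apply: le_trans S_le0 _; rewrite mulr_ge0 ?sqrtr_ge0.
rewrite -sqrtrM ?sum_sq_ge0 // -(ger0_norm (ltW S_gt0)) -sqrtr_sqr ler_wsqrtr //.
have [Y0|Y_neq0] := eqVneq Y 0.
  suff S0 : S = 0 by rewrite S0 ltxx in S_gt0.
  have cd0 i : c i ^+ 2 + d i ^+ 2 = 0.
    apply: (psumr_eq0P (P := predT)) Y0 i isT => j _.
    by rewrite addr_ge0 ?sqr_ge0.
  rewrite /S big1 // => i _; move/eqP: (cd0 i).
  by rewrite paddr_eq0 ?sqr_ge0 // !sqrf_eq0 => /andP[/eqP-> /eqP->]; rewrite !mulr0 addr0.
have lagrange : \sum_i ((Y * p i - S * c i) ^+ 2 + (Y * q i - S * d i) ^+ 2) =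
    Y * (X * Y - S ^+ 2).
  transitivity (\sum_i (Y ^+ 2 * (p i ^+ 2 + q i ^+ 2) -
      (2%:R * Y * S) * (p i * c i + q i * d i) + S ^+ 2 * (c i ^+ 2 + d i ^+ 2))).
    by apply: eq_bigr => i _; ring.
  by rewrite big_split sumrB /= -!mulr_sumr -/X -/Y -/S; ring.
have Y_gt0 : 0 < Y by rewrite lt_def Y_neq0 sum_sq_ge0.
by rewrite -subr_ge0 -(pmulr_rge0 _ Y_gt0) -lagrange sum_sq_ge0.
Qed.

Lemma trmxC_mul (C : numClosedFieldType) m p r (A : 'M[C]_(m, p)) (B : 'M[C]_(p, r)) :
  (A *m B) ^t* = B ^t* *m A ^t*.
Proof. by rewrite trmx_mul map_mxM. Qed.

Section EuclideanNorm.
Variable R : realType.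
Local Notation C := (complex R).

Lemma Re_sum (I : Type) (r : seq I) (P : pred I) (F : I -> C) :
  Re (\sum_(i <- r | P i) F i) = \sum_(i <- r | P i) Re (F i).
Proof. exact: (raddf_sum (@complex.Re R : Rcomplex R -> R)). Qed.

Variable n : nat.
Implicit Types (u v w : 'cV[C]_n) (M U V : 'M[C]_n).

Definition sqnorm v : R := \sum_i (Re (v i 0) ^+ 2 + Im (v i 0) ^+ 2).

Definition rdot u v : R := \sum_i (Re (u i 0) * Re (v i 0) + Im (u i 0) * Im (v i 0)).

Lemma vnormE v : vnorm v = Num.sqrt (sqnorm v). Proof. by []. Qed.

Lemma sqnorm_ge0 v : 0 <= sqnorm v.
Proof. by apply: sumr_ge0 => i _; rewrite addr_ge0 ?sqr_ge0. Qed.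

Lemma vnorm_ge0 v : 0 <= vnorm v. Proof. exact: sqrtr_ge0. Qed.

Lemma sqr_vnorm v : vnorm v ^+ 2 = sqnorm v.
Proof. by rewrite sqr_sqrtr ?sqnorm_ge0. Qed.

Lemma rdotvv v : rdot v v = sqnorm v.
Proof. by apply: eq_bigr => i _; rewrite !expr2. Qed.

Lemma rdotE u v : rdot u v = Re ((u ^t* *m v) 0 0).
Proof.
rewrite mxE Re_sum.
by apply: eq_bigr => i _; rewrite !mxE; case: (u i 0) => a b; case: (v i 0) => c d; simpc.
Qed.

Lemma rdot_le u v : rdot u v <= vnorm u * vnorm v.
Proof. exact: CauchySchwarz_pairs. Qed.

Lemma normr_rdot_le u v : `|rdot u v| <= vnorm u * vnorm v.
Proof.
have rdotNl : rdot (- u) v = - rdot u v.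
  rewrite /rdot -sumrN; apply: eq_bigr => i _.
  by rewrite mxE; case: (u i 0) => a b /=; ring.
have vnormN : vnorm (- u) = vnorm u.
  rewrite !vnormE; congr Num.sqrt; apply: eq_bigr => i _.
  by rewrite mxE; case: (u i 0) => a b /=; rewrite !sqrrN.
by rewrite ler_norml rdot_le -lerNl -rdotNl -vnormN rdot_le.
Qed.

Lemma vnorm_unitary U v : U ^t* *m U = 1%:M -> vnorm (U *m v) = vnorm v.
Proof.
move=> UU; rewrite !vnormE -!rdotvv !rdotE trmxC_mul.
by rewrite -mulmxA (mulmxA (U ^t*)) UU mul1mx.
Qed.

Lemma vnorm0 : vnorm (0 : 'cV[C]_n) = 0.
Proof. by rewrite vnormE /sqnorm big1 ?sqrtr0 // => i _; rewrite mxE expr2 mulr0 addr0. Qed.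

Lemma specnorm_bounded M : exists B, forall v, vnorm v <= 1 -> vnorm (M *m v) <= B.
Proof.
pose r i : 'cV[C]_n := (row i M) ^t*.
pose r' i : 'cV[C]_n := (- 'i *: row i M) ^t*.
exists (Num.sqrt (\sum_i (vnorm (r i) ^+ 2 + vnorm (r' i) ^+ 2))) => v v_le1.
have entry_le w : rdot w v ^+ 2 <= vnorm w ^+ 2.
  rewrite -real_normK ?num_real // lerXn2r ?nnegrE ?vnorm_ge0 //.
  by apply: le_trans (normr_rdot_le w v) _; rewrite ler_piMr ?vnorm_ge0.
rewrite vnormE ler_wsqrtr // ler_sum // => i _.
have Mv_i : (M *m v) i 0 = (row i M *m v) 0 0 by rewrite -row_mul [RHS]mxE.
have Re_Mv : Re ((M *m v) i 0) = rdot (r i) v by rewrite rdotE /r trmxCK Mv_i.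
have Im_Mv : Im ((M *m v) i 0) = rdot (r' i) v.
  rewrite Mv_i rdotE /r' trmxCK -scalemxAl [in RHS]mxE.
  by case: (_ 0 0) => a b; simpc.
by rewrite Re_Mv Im_Mv lerD.
Qed.

Lemma specnorm_ub M v : vnorm v <= 1 -> vnorm (M *m v) <= specnorm M.
Proof.
move=> v_le1; have [B le_B] := specnorm_bounded M.
apply: sup_upper_bound; last by exists v.
split; first by exists (vnorm (M *m v)), v.
by exists B => _ [w w_le1 <-]; exact: le_B.
Qed.

Lemma specnorm_le M (c : R) :
  (forall v, vnorm v <= 1 -> vnorm (M *m v) <= c) -> specnorm M <= c.
Proof.
move=> le_c; apply: ge_sup; last by move=> _ [w w_le1 <-]; exact: le_c.
by exists (vnorm (M *m 0)), 0 => //=; rewrite vnorm0.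
Qed.

Lemma specnorm_ge0 M : 0 <= specnorm M.
Proof. by apply: le_trans (vnorm_ge0 (M *m 0)) (specnorm_ub _ _); rewrite vnorm0. Qed.

Lemma specnorm_unitary_mul M U V : U ^t* *m U = 1%:M -> V ^t* *m V = 1%:M ->
  specnorm (U *m M *m V) <= specnorm M.
Proof.
move=> UU VV; apply: specnorm_le => v v_le1.
by rewrite -!mulmxA vnorm_unitary // specnorm_ub // vnorm_unitary.
Qed.

End EuclideanNorm.

Section RintegralN.
Context d (T : measurableType d) (R : realType) (mu : {measure set T -> \bar R}).

Lemma RintegralN (D : set T) (f : T -> R) :
  \int[mu]_(x in D) (- f x) = - \int[mu]_(x in D) f x.
Proof.
rewrite /Rintegral integralE [X in _ = - fine X]integralE.
have -> : ((fun x => (- f x)%:E)^\+ = (fun x => (f x)%:E)^\-)%E.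
  by rewrite -funeposN; congr (_^\+)%E; apply/funext => x; rewrite EFinN.
have -> : ((fun x => (- f x)%:E)^\- = (fun x => (f x)%:E)^\+)%E.
  by rewrite -funenegN; congr (_^\-)%E; apply/funext => x; rewrite EFinN.
have : (0 <= \int[mu]_(x in D) ((fun x => (f x)%:E)^\+ x))%E.
  by apply: integral_ge0 => x _; exact: funepos_ge0.
have : (0 <= \int[mu]_(x in D) ((fun x => (f x)%:E)^\- x))%E.
  by apply: integral_ge0 => x _; exact: funeneg_ge0.
case: (\int[mu]_(x in D) _)%E => [a||] //; case: (\int[mu]_(x in D) _)%E => [b||] //= _ _.
- by rewrite opprB.
all: by rewrite oppr0.
Qed.

End RintegralN.

Lemma ointN (R : realType) (a b : R) (f : R -> R) : oint a b (fun s => - f s) = - oint a b f.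
Proof. by rewrite /oint; case: ifP => _; rewrite RintegralN. Qed.

Section SkewHermitian.
Variable R : realType.
Local Notation C := (complex R).
Variable n : nat.
Implicit Types (X Y M : 'M[C]_n).

Definition skewmx M := M ^t* = - M.

Lemma skewmxP M : skewmx M <-> forall i j, M j i = - (M i j)^*.
Proof.
split => [/matrixP skM i j | skM].
  by have := skM i j; rewrite !mxE => skM_ij; rewrite -[M j i]conjCK skM_ij rmorphN.
by apply/matrixP => i j; rewrite !mxE skM rmorphN /= conjCK.
Qed.

Lemma skewmxB X Y : skewmx X -> skewmx Y -> skewmx (X - Y).
Proof. by rewrite /skewmx => skX skY; rewrite (raddfB (@trmx C n n)) map_mxB skX skY opprD. Qed.

Lemma skewmxZ (c : C) X : c^* = c -> skewmx X -> skewmx (c *: X).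
Proof. by rewrite /skewmx => cc skX; rewrite [(c *: X)^T]linearZ map_mxZ skX /= cc scalerN. Qed.

Lemma skewmx_comm X Y : skewmx X -> skewmx Y -> skewmx (comm X Y).
Proof.
rewrite /skewmx /comm => skX skY.
by rewrite (raddfB (@trmx C n n)) map_mxB !trmxC_mul skX skY !mulNmx !mulmxN !opprK opprB.
Qed.

Lemma skewmx_mxint (a b : R) (F : R -> 'M[C]_n) :
  (forall s, skewmx (F s)) -> skewmx (mxint a b F).
Proof.
move=> skF; apply/skewmxP => i j; rewrite !mxE.
have ReF s : Re (F s j i) = - Re (F s i j).
  by rewrite (skewmxP _).1 //; case: (F s i j).
have ImF s : Im (F s j i) = Im (F s i j).
  by rewrite (skewmxP _).1 //; case: (F s i j) => x y /=; rewrite opprK.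
rewrite (funext ReF) (funext ImF) ointN.
by apply/eqP; rewrite eq_complex /= opprK !eqxx.
Qed.

Lemma skewmx_A (H : R -> 'M[C]_n) t : is_hermitian (H t) -> skewmx (A H t).
Proof.
move=> hermH; apply/skewmxP => i j; rewrite /A !mxE hermH rmorphN rmorphM /=.
by rewrite conjCi mulNr opprK.
Qed.

Lemma skewmx_Omega2 (H : R -> 'M[C]_n) t :
  (forall s, is_hermitian (H s)) -> skewmx (Omega2 H t).
Proof.
move=> hermH; have skA s : skewmx (A H s) by exact: skewmx_A.
apply: skewmxB; first exact: skewmx_mxint.
apply: skewmxZ; first by rewrite fmorphV /= conjC_nat.
by apply: skewmx_mxint => s; apply: skewmx_comm => //; exact: skewmx_mxint.
Qed.

End SkewHermitian.

Section EigenbasisOfAd.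
Local Open Scope complex_scope.
Variable R : realType.
Local Notation C := (complex R).
Variable n : nat.
Implicit Types (Y Z : 'M[C]_n) (r : 'I_n -> R).

Lemma adk_diag (d : 'rV[C]_n) k Z a b :
  adk (diag_mx d) k Z a b = (d 0 a - d 0 b) ^+ k * Z a b.
Proof.
elim: k a b => [|k IHk] a b; first by rewrite expr0 mul1r.
by rewrite [adk _ _ _]iterS /comm mul_diag_mx mul_mx_diag !mxE !IHk exprS; ring.
Qed.

Lemma adk_conj (P Q D Y : 'M[C]_n) k : P *m Q = 1%:M -> Q *m P = 1%:M ->
  adk (Q *m D *m P) k Y = Q *m adk D k (P *m Y *m Q) *m P.
Proof.
move=> PQ QP; elim: k => [|k IHk].
  by rewrite /adk /= !mulmxA QP mul1mx -mulmxA QP mulmx1.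
rewrite [adk _ k.+1 _]iterS [adk D k.+1 _]iterS -!/(adk _ k _) IHk /comm.
by rewrite mulmxBr mulmxBl; congr (_ - _); rewrite -!mulmxA (mulmxA P Q) PQ mul1mx.
Qed.

Lemma skewmx_spectral (Om : 'M[C]_n) : skewmx Om -> exists P r,
  [/\ P *m P ^t* = 1%:M, P ^t* *m P = 1%:M &
      Om = P ^t* *m diag_mx (\row_a ('i * (r a)%:C)) *m P].
Proof.
move=> skOm; set P := spectralmx Om; set d := spectral_diag Om.
have P_unitary : P \is unitarymx := spectral_unitarymx Om.
have PP : P *m P ^t* = 1%:M by apply/unitarymxP.
have PtP : P ^t* *m P = 1%:M by rewrite -invmx_unitary // mulVmx // spectral_unit.
have OmE : Om = P ^t* *m diag_mx d *m P.
  rewrite -invmx_unitary //; apply/orthomx_spectralP.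
  by rewrite qualifE skOm mulmxN mulNmx.
have skd : skewmx (diag_mx d).
  rewrite (_ : diag_mx d = P *m Om *m P ^t*).
    by rewrite /skewmx !trmxC_mul trmxCK skOm mulNmx mulmxN mulmxA.
  by rewrite OmE !mulmxA PP mul1mx -mulmxA PP mulmx1.
exists P, (fun a => Im (d 0 a)); split => //.
suff -> : \row_a ('i * (Im (d 0 a))%:C) = d by [].
apply/rowP => a; rewrite mxE.
have := (skewmxP _).1 skd a a; rewrite !mxE eqxx mulr1n.
case: (d 0 a) => x y /eqP; rewrite eq_complex /= => /andP[/eqP x0 _].
have -> : x = 0 by lra.
by rewrite -complexiE; simpc.
Qed.

Definition g_schur r Z : 'M[C]_n := \matrix_(a, b) (g_imag (r a - r b) * Z a b).

Lemma cvg_sum_g_imag (f : C -> R) (e : nat -> C)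
    (q : 'I_n -> 'I_n -> C) (mu : 'I_n -> 'I_n -> R) :
  {morph f : x y / x + y} -> f 0 = 0 ->
  (forall q m, (fun N => \sum_(0 <= k < N) f (q * ('i * m%:C) ^+ k) / (k + 4)`!%:R)
     @ \oo --> f (q * g_imag m)) ->
  (forall k, e k = \sum_b \sum_a q a b * ('i * (mu a b)%:C) ^+ k) ->
  (fun N => \sum_(0 <= k < N) f (e k) / (k + 4)`!%:R) @ \oo -->
  f (\sum_b \sum_a q a b * g_imag (mu a b)).
Proof.
move=> fD f0 cvg_f eE; have f_sum := big_morph f fD f0.
have -> : (fun N => \sum_(0 <= k < N) f (e k) / (k + 4)`!%:R) =
    (fun N => \sum_b \sum_a \sum_(0 <= k < N)
     f (q a b * ('i * (mu a b)%:C) ^+ k) / (k + 4)`!%:R).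
  apply/funext => N; transitivity (\sum_(0 <= k < N) \sum_b \sum_a
      f (q a b * ('i * (mu a b)%:C) ^+ k) / (k + 4)`!%:R).
    apply: eq_bigr => k _; rewrite eE f_sum mulr_suml; apply: eq_bigr => b _.
    by rewrite f_sum mulr_suml.
  by rewrite exchange_big; apply: eq_bigr => b _; rewrite exchange_big.
rewrite f_sum; apply: (cvg_big add_continuous) => // b _.
by rewrite f_sum; apply: (cvg_big add_continuous) => // a _.
Qed.

Lemma g_ad_conj P Q r Y : P *m Q = 1%:M -> Q *m P = 1%:M ->
  g_ad (Q *m diag_mx (\row_a ('i * (r a)%:C)) *m P) Y = Q *m g_schur r (P *m Y *m Q) *m P.
Proof.
move=> PQ QP; apply/matrixP => i j; set Z := P *m Y *m Q.
pose q a b := Q i a * Z a b * P b j.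
pose mu a b := r a - r b.
have adk_ij k : adk (Q *m diag_mx (\row_a ('i * (r a)%:C)) *m P) k Y i j =
    \sum_b \sum_a q a b * ('i * (mu a b)%:C) ^+ k.
  rewrite adk_conj // mxE; apply: eq_bigr => b _; rewrite mxE mulr_suml.
  apply: eq_bigr => a _; rewrite adk_diag -/Z [(\row_a _) 0 a]mxE [(\row_a _) 0 b]mxE.
  by rewrite /q /mu rmorphB /= -mulrBr; ring.
have rhs_ij : (Q *m g_schur r Z *m P) i j = \sum_b \sum_a q a b * g_imag (mu a b).
  rewrite mxE; apply: eq_bigr => b _; rewrite mxE mulr_suml.
  by apply: eq_bigr => a _; rewrite mxE /q /mu; ring.
have ReD : {morph @complex.Re R : z w / z + w} by move=> [? ?] [? ?].
have ImD : {morph @complex.Im R : z w / z + w} by move=> [? ?] [? ?].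
rewrite /g_ad mxE rhs_ij.
rewrite (cvg_lim _ (cvg_sum_g_imag ReD _ (@cvg_Re_g_imag R) adk_ij)) //.
rewrite (cvg_lim _ (cvg_sum_g_imag ImD _ (@cvg_Im_g_imag R) adk_ij)) //.
by case: (\sum_b _).
Qed.

End EigenbasisOfAd.

Section SchurMultiplierBound.
Variable R : realType.
Local Notation C := (complex R).
Variable n : nat.
Implicit Types (x u v : 'cV[C]_n) (Z : 'M[C]_n) (r : 'I_n -> R).

Definition phase r (s : R) v : 'cV[C]_n := \col_a (v a 0 * expi (- (s * r a))).

Lemma vnorm_phase r s v : vnorm (phase r s v) = vnorm v.
Proof.
rewrite !vnormE; congr Num.sqrt; apply: eq_bigr => a _; rewrite mxE.
case: (v a 0) => x y; rewrite /expi; simpc.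
by rewrite /= -[RHS]mulr1 -(cos2Dsin2 (- (s * r a))); ring.
Qed.

Lemma rdot_mulmx x Z v :
  rdot x (Z *m v) = \sum_a \sum_b Re ((x a 0)^* * Z a b * v b 0).
Proof.
apply: eq_bigr => a _.
have -> : \sum_b Re ((x a 0)^* * Z a b * v b 0) = Re ((x a 0)^* * (Z *m v) a 0).
  by rewrite mxE mulr_sumr Re_sum; apply: eq_bigr => b _; rewrite mulrA.
by case: (x a 0) => p q; case: ((Z *m v) a 0) => c d; simpc.
Qed.

Lemma rdot_phase r s x Z u :
  rdot (phase r s x) (Z *m phase r s u) =
  \sum_a \sum_b Re ((x a 0)^* * Z a b * u b 0 * expi (s * (r a - r b))).
Proof.
rewrite rdot_mulmx; apply: eq_bigr => a _; apply: eq_bigr => b _; rewrite !mxE.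
congr Re; rewrite rmorphM /= -!mulrA; congr (_ * _); rewrite mulrCA; congr (_ * _).
by rewrite conj_expi opprK mulrCA -expiD mulrBr addrC.
Qed.

Lemma continuous_rdot_phase r x Z u :
  continuous (fun s => rdot (phase r s x) (Z *m phase r s u)).
Proof.
have -> : (fun s => rdot (phase r s x) (Z *m phase r s u)) = fun s =>
    \sum_a \sum_b Re ((x a 0)^* * Z a b * u b 0 * expi (s * (r a - r b))).
  by apply/funext => s; exact: rdot_phase.
apply: (continuous_big add_continuous) => a _.
apply: (continuous_big add_continuous) => b _.
by continuity.
Qed.

Lemma rdot_g_schur r Z x u :
  rdot x (g_schur r Z *m u) =
  int01 (fun s => (1 - s) ^+ 3 * rdot (phase r s x) (Z *m phase r s u)) / 6%:R.
Proof.
pose q a b := (x a 0)^* * Z a b * u b 0.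
have cont_ab a b : continuous (fun s : R => (1 - s) ^+ 3 * Re (q a b * expi (s * (r a - r b)))).
  by continuity.
have -> : (fun s => (1 - s) ^+ 3 * rdot (phase r s x) (Z *m phase r s u)) = fun s =>
    \sum_a \sum_b (1 - s) ^+ 3 * Re (q a b * expi (s * (r a - r b))).
  apply/funext => s; rewrite rdot_phase mulr_sumr.
  by apply: eq_bigr => a _; rewrite mulr_sumr.
rewrite int01_sum; last by move=> a; apply: (continuous_big add_continuous) => b _.
rewrite rdot_mulmx mulr_suml; apply: eq_bigr => a _.
rewrite int01_sum // mulr_suml; apply: eq_bigr => b _.
by rewrite -Re_mul_g_imag mxE /q; congr Re; ring.
Qed.

Lemma vnorm_g_schur_le r Z u :
  vnorm u <= 1 -> vnorm (g_schur r Z *m u) <= specnorm Z / 24%:R.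
Proof.
move=> u_le1; set x := g_schur r Z *m u; set K := vnorm x * specnorm Z.
have rdot_phase_le s : rdot (phase r s x) (Z *m phase r s u) <= K.
  apply: le_trans (rdot_le _ _) _; rewrite vnorm_phase ler_wpM2l ?vnorm_ge0 //.
  by rewrite specnorm_ub // vnorm_phase.
have cont_rdot := @continuous_rdot_phase r x Z u.
have sq_le : vnorm x ^+ 2 <= K / 24%:R.
  have -> : K / 24%:R = int01 (fun s => K * (1 - s) ^+ 3) / 6%:R.
    by rewrite int01Zl ?int01_onemX3; [field|continuity].
  rewrite sqr_vnorm -rdotvv {2}/x rdot_g_schur ler_wpM2r ?invr_ge0 //.
  rewrite ler_int01; [by []|by continuity|by continuity|].
  by move=> s /andP[s0 s1]; rewrite mulrC ler_wpM2r ?exprn_ge0 ?subr_ge0.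
have := vnorm_ge0 x; have := specnorm_ge0 Z; rewrite /K in sq_le; nra.
Qed.

Lemma specnorm_g_schur_le r Z : specnorm (g_schur r Z) <= specnorm Z / 24%:R.
Proof. by apply: specnorm_le => u; exact: vnorm_g_schur_le. Qed.

Lemma specnorm_g_ad_skew (Om Y : 'M[C]_n) :
  skewmx Om -> specnorm (g_ad Om Y) <= specnorm Y / 24%:R.
Proof.
move=> skOm; have [P [r [PP PtP ->]]] := skewmx_spectral skOm.
rewrite g_ad_conj //; apply: le_trans (specnorm_unitary_mul _ _ _) _.
- by rewrite trmxCK.
- exact: PtP.
apply: le_trans (specnorm_g_schur_le _ _) _.
by rewrite ler_wpM2r ?invr_ge0 // specnorm_unitary_mul // trmxCK.
Qed.

End SchurMultiplierBound.

Theorem lemma7 (R : realType) : exists K : R,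
  forall (n : nat) (H : R -> 'M[complex R]_n),
    mx_continuous H -> (forall t, is_hermitian (H t)) ->
    forall (t : R),
      specnorm (g_ad (Omega2 H t) (adk (Omega2 H t) 3 (dOmega2 H t)))
      <= K * specnorm (adk (Omega2 H t) 3 (dOmega2 H t)).
Proof.
exists 24%:R^-1 => n H _ hermH t.
by rewrite mulrC; apply: specnorm_g_ad_skew; exact: skewmx_Omega2.
Qed.
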